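(* A variety of Ockham algebras is a discriminator variety if and only if it is generated by a finite set $\mathcal B$ of Ockham algebras such that, for each $\mathbf A\in\mathcal B$, $D(\mathbf A)\cong\mathbb C_m$ for some odd $m\in\mathbb N$.
   Context: An Ockham algebra is an algebra $\langle O;\vee,\wedge,g,0,1\rangle$ where $\langle O;\vee,\wedge,0,1\rangle$ is a bounded distributive lattice and $g$ is a dual endomorphism of it. An Ockham space is a Priestley space with a continuous order-reversing self-map $g$; isomorphisms are order- and topology-isomorphisms commuting with $g$. For an Ockham algebra $\mathbf A$, $D(\mathbf A)$ is the set of bounded-lattice homomorphisms $x$ from the lattice reduct of $\mathbf A$ to $\mathbf 2$, ordered pointwise, topology from $\{0,1\}^A$, with $g^{D(\mathbf A)}(x)=c\circ x\circ g^{\mathbf A}$, $c$ the Boolean complement on $\{0,1\}$. For $m\in\mathbb N$, $\mathbb C_m$ is the Ockham space on $\{0,1,\dots,m-1\}$ with discrete topology, the order an antichain, and $g(i)=i+1 \pmod m$. A variety is a discriminator variety if some ternary term induces, on every subdirectly irreducible member, the ternary discriminator $\tau(x,y,z)=x$ if $x\ne y$, $=z$ if $x=y$. *)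

From Stdlib Require List.
From mathcomp Require Import all_boot.
Set Implicit Arguments.
Unset Strict Implicit.
Unset Printing Implicit Defensive.

Record ockham := Ockham {
  carrier :> Type;
  ojoin : carrier -> carrier -> carrier;
  omeet : carrier -> carrier -> carrier;
  og : carrier -> carrier;
  ozero : carrier;
  oone : carrier;
  ojoinC : forall x y, ojoin x y = ojoin y x;
  omeetC : forall x y, omeet x y = omeet y x;
  ojoinA : forall x y z, ojoin x (ojoin y z) = ojoin (ojoin x y) z;
  omeetA : forall x y z, omeet x (omeet y z) = omeet (omeet x y) z;
  ojoin_absorb : forall x y, ojoin x (omeet x y) = x;
  omeet_absorb : forall x y, omeet x (ojoin x y) = x;
  omeet_distr : forall x y z, omeet x (ojoin y z) = ojoin (omeet x y) (omeet x z);
  ojoin0 : forall x, ojoin x ozero = x;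
  omeet1 : forall x, omeet x oone = x;
  og_join : forall x y, og (ojoin x y) = omeet (og x) (og y);
  og_meet : forall x y, og (omeet x y) = ojoin (og x) (og y);
  og0 : og ozero = oone;
  og1 : og oone = ozero
}.

Inductive term :=
  | tvar of nat
  | tjoin of term & term
  | tmeet of term & term
  | tg of term
  | tzero
  | tone.

Fixpoint teval (A : ockham) (v : nat -> A) (t : term) : A :=
  match t with
  | tvar i => v i
  | tjoin s u => ojoin (teval v s) (teval v u)
  | tmeet s u => omeet (teval v s) (teval v u)
  | tg s => og (teval v s)
  | tzero => ozero A
  | tone => oone A
  end.

Fixpoint tvars_lt (n : nat) (t : term) : Prop :=
  match t with
  | tvar i => i < n
  | tjoin s u | tmeet s u => tvars_lt n s /\ tvars_lt n u
  | tg s => tvars_lt n s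
  | tzero | tone => True
  end.

Definition satisfies (A : ockham) (s u : term) : Prop :=
  forall v : nat -> A, teval v s = teval v u.

Definition in_variety (E : term -> term -> Prop) (A : ockham) : Prop :=
  forall s u, E s u -> satisfies A s u.

Definition theory (B : seq ockham) : term -> term -> Prop :=
  fun s u => forall A, List.In A B -> satisfies A s u.

(* The variety defined by E is generated by B: it equals Mod(Th(B)) = HSP(B). *)
Definition generated_by (E : term -> term -> Prop) (B : seq ockham) : Prop :=
  forall A : ockham, in_variety E A <-> in_variety (theory B) A.

Definition congruence (A : ockham) (th : A -> A -> Prop) : Prop :=
  [/\ (forall x, th x x),
      (forall x y, th x y -> th y x) /\
      (forall x y z, th x y -> th y z -> th x z),
      (forall x y x' y', th x x' -> th y y' -> th (ojoin x y) (ojoin x' y')),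
      (forall x y x' y', th x x' -> th y y' -> th (omeet x y) (omeet x' y'))
    & (forall x x', th x x' -> th (og x) (og x'))].

Definition subdirectly_irreducible (A : ockham) : Prop :=
  exists a b : A, a <> b /\
    forall th, congruence th -> (exists x y, th x y /\ x <> y) -> th a b.

Definition assign3 (A : ockham) (x y z : A) : nat -> A :=
  fun i => match i with 0 => x | 1 => y | _ => z end.

Definition induces_discriminator (A : ockham) (t : term) : Prop :=
  forall x y z : A,
    (x <> y -> teval (assign3 x y z) t = x) /\
    (x = y -> teval (assign3 x y z) t = z).

Definition discriminator_variety (E : term -> term -> Prop) : Prop :=
  exists t : term, tvars_lt 3 t /\
    forall A : ockham, in_variety E A -> subdirectly_irreducible A ->
      induces_discriminator A t.

(* elements of D(A): bounded-lattice homomorphisms A -> 2 *)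
Definition in_dual (A : ockham) (x : A -> bool) : Prop :=
  [/\ (forall a b, x (ojoin a b) = x a || x b),
      (forall a b, x (omeet a b) = x a && x b),
      x (ozero A) = false
    & x (oone A) = true].

Definition dual_g (A : ockham) (x : A -> bool) : A -> bool :=
  fun a => ~~ x (og a).

(* phi : D(A) -> C_m is an isomorphism of Ockham spaces, where C_m has carrier
   'I_m, discrete topology, antichain order and g(i) = i+1 mod m.
   D(A) carries the pointwise order and the subspace topology of {0,1}^A,
   whose basic open neighbourhoods of x are the sets of y agreeing with x
   on a finite set s of elements of A. *)
Definition dual_iso_Cm (A : ockham) (m : nat) (phi : (A -> bool) -> 'I_m) : Prop :=
  [/\
      (forall x y, in_dual x -> in_dual y -> phi x = phi y -> forall a, x a = y a),
      (forall i : 'I_m, exists2 x, in_dual x & phi x = i),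
      (forall x y, in_dual x -> in_dual y ->
         ((forall a, x a ==> y a) <-> phi x = phi y)),
      (* continuity of phi (continuity of phi^-1 is automatic, C_m discrete) *)
      (forall (i : 'I_m) x, in_dual x -> phi x = i ->
         exists s : seq A, forall y, in_dual y ->
           (forall a, List.In a s -> y a = x a) -> phi y = i)
    &
      (forall x, in_dual x -> (phi (dual_g x) : nat) = (phi x).+1 %% m)].

Definition dual_isomorphic_Cm (A : ockham) (m : nat) : Prop :=
  exists phi : (A -> bool) -> 'I_m, dual_iso_Cm phi.

(* If D(A) is an odd cycle C_m, every g-orbit of points of A is all of D(A) and has odd
   length.  Taking L an odd common multiple of the periods of the finitely many
   generators, g^L acts at each point as Boolean complement and the join of the
   g^(2k) (k < L) sends every nonzero element to 1; this gives an explicit discriminator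
   term on each generator.  Finitely many identities in the discriminator term (two
   congruences with trivial meet, one of them containing (x, y)) then hold in the whole
   variety and force the same term to be a discriminator on every subdirectly
   irreducible member.

   Conversely, let t be a discriminator on the subdirectly irreducible members.  A term
   is monotone for the order on points that is reversed at odd g-depth, and comparing
   t(p,q,r) = p with t(q,q,r) = r shows that any two points lie in each other's g-orbit
   at an even and at an odd distance below the depth of t.  So the dual of such a member
   is a single cycle of odd length m, and the member is the algebra of all subsets of
   C_m.  The variety is generated by the finitely many such algebras it contains,
   because an identity failing in it fails in a subdirectly irreducible quotient. *)

From Stdlib Require List.
From mathcomp Require Import all_boot.
From mathcomp Require Import boolp classical_sets zify.
Set Implicit Arguments.
Unset Strict Implicit.
Unset Printing Implicit Defensive.
Local Open Scope classical_set_scope.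

(** * Lattice order and prime filters *)

Section LatticeOrder.
Variable A : ockham.
Implicit Types x y z : A.

Definition ole x y := omeet x y = x.

Lemma omeetxx x : omeet x x = x.
Proof. by rewrite -{2}(ojoin_absorb x x) omeet_absorb. Qed.

Lemma omeet0x x : omeet (ozero A) x = ozero A.
Proof. by rewrite -{1}(ojoin0 x) ojoinC omeet_absorb. Qed.

Lemma omeetx0 x : omeet x (ozero A) = ozero A.
Proof. by rewrite omeetC omeet0x. Qed.

Lemma omeetDl x y z : omeet (ojoin y z) x = ojoin (omeet y x) (omeet z x).
Proof. by rewrite omeetC omeet_distr (omeetC x) (omeetC x). Qed.

Lemma ole_refl x : ole x x. Proof. exact: omeetxx. Qed.

Lemma ole_trans x y z : ole x y -> ole y z -> ole x z.
Proof. by rewrite /ole => xy yz; rewrite -xy -omeetA yz. Qed.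

Lemma ole_anti x y : ole x y -> ole y x -> x = y.
Proof. by rewrite /ole => xy yx; rewrite -xy omeetC yx. Qed.

Lemma ole_meetl x y : ole (omeet x y) x.
Proof. by rewrite /ole omeetC omeetA omeetxx. Qed.

Lemma ole_meetr x y : ole (omeet x y) y.
Proof. by rewrite /ole -omeetA omeetxx. Qed.

Lemma ole_meet x y z : ole z x -> ole z y -> ole z (omeet x y).
Proof. by rewrite /ole => zx zy; rewrite omeetA zx zy. Qed.

Lemma ole_join x y z : ole x z -> ole y z -> ole (ojoin x y) z.
Proof. by rewrite /ole => xz yz; rewrite omeetDl xz yz. Qed.

Lemma ole_joinl x y : ole x (ojoin x y). Proof. exact: omeet_absorb. Qed.

Lemma ole_joinr x y : ole y (ojoin x y).
Proof. by rewrite ojoinC; apply: ole_joinl. Qed.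

Lemma ole0x x : ole (ozero A) x. Proof. exact: omeet0x. Qed.

Lemma olex1 x : ole x (oone A). Proof. exact: omeet1. Qed.

Lemma ole_meet2l x x' y : ole x x' -> ole (omeet x y) (omeet x' y).
Proof.
move=> xx'; apply: ole_meet; last exact: ole_meetr.
exact: ole_trans (ole_meetl _ _) xx'.
Qed.

End LatticeOrder.

Section Points.
Variable A : ockham.
Implicit Types (p : A -> bool) (a b : A).

Lemma dual_join p a b : in_dual p -> p (ojoin a b) = p a || p b. Proof. by case. Qed.
Lemma dual_meet p a b : in_dual p -> p (omeet a b) = p a && p b. Proof. by case. Qed.
Lemma dual_zero p : in_dual p -> p (ozero A) = false. Proof. by case. Qed.
Lemma dual_one p : in_dual p -> p (oone A) = true. Proof. by case. Qed.

End Points.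

Section PrimeFilter.
Variables (A : ockham) (a b : A).
Hypothesis nab : ~ ole a b.

Definition is_filter (F : set A) :=
  (forall x y, F x -> ole x y -> F y) /\ (forall x y, F x -> F y -> F (omeet x y)).

(* Zorn's lemma runs over the [X] such that [up X], the filter generated by [a] and [X],
   avoids [b]; the union of the empty chain is then admissible. *)
Let up (X : set A) : set A := fun e => ole a e \/ X e.
Let avoids_b (X : set A) := is_filter (up X) /\ ~ up X b.

Lemma avoids_b_bigcup (C : set (set A)) :
  C `<=` avoids_b -> total_on C subset -> avoids_b (\bigcup_(X in C) X).
Proof.
move=> CP Ctot; have lift X x : C X -> up X x -> up (\bigcup_(X in C) X) x.
  by move=> CX [ax|Xx]; [left|right; exists X].
split; [split|].
- move=> x y [ax|[X CX Xx]] xy; first by left; apply: ole_trans ax xy.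
  by apply: (lift X) => //; apply: (CP X CX).1.1 xy; right.
- move=> x y [ax|[X CX Xx]] [ay|[Y CY Yy]].
  + by left; apply: ole_meet.
  + by apply: (lift Y) => //; apply: (CP Y CY).1.2; [left|right].
  + by apply: (lift X) => //; apply: (CP X CX).1.2; [right|left].
  + have [XY|YX] := Ctot X Y CX CY.
    * by apply: (lift Y) => //; apply: (CP Y CY).1.2; right=> //; apply: XY.
    * by apply: (lift X) => //; apply: (CP X CX).1.2; right=> //; apply: YX.
- by case=> [//|[X CX Xb]]; apply: (CP X CX).2; right.
Qed.

Let generated (F : set A) (c : A) : set A := fun x => exists2 f, F f & ole (omeet f c) x.

Lemma generated_filter F c : is_filter F -> is_filter (generated F c).
Proof.
move=> [Fup Fmeet]; split=> [x y [f Ff fx] xy|x y [f Ff fx] [f' Ff' fy]].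
  by exists f => //; apply: ole_trans xy.
exists (omeet f f'); first exact: Fmeet.
apply: ole_meet.
- by apply: ole_trans fx; apply: ole_meet2l; apply: ole_meetl.
- by apply: ole_trans fy; apply: ole_meet2l; apply: ole_meetr.
Qed.

Lemma maximal_avoids_b_prime M : avoids_b M -> (forall X, M `<` X -> ~ avoids_b X) ->
  forall c e, up M (ojoin c e) -> up M c \/ up M e.
Proof.
move=> [[Fup Fmeet] Fb] Mmax c e Fce; apply: contrapT => /not_orP[nFc nFe].
have below_b c' : ~ up M c' -> exists2 f, up M f & ole (omeet f c') b.
  move=> nFc'; apply: contrapT => nGb.
  have up_gen : up (generated (up M) c') = generated (up M) c'.
    apply: funext => x; apply: propext; split=> [[ax|//]|]; last by right.
    by exists x; [left|apply: ole_meetl].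
  apply: (Mmax (generated (up M) c')); last first.
    by rewrite /avoids_b up_gen; split=> //; apply: generated_filter.
  split=> [x Mx|MG]; first by exists x; [right|apply: ole_meetl].
  by apply: nFc'; right; apply: MG; exists (oone A); [left; apply: olex1|apply: ole_meetr].
have [f1 F1 f1b] := below_b c nFc; have [f2 F2 f2b] := below_b e nFe.
apply: Fb; apply: (Fup (omeet (omeet f1 f2) (ojoin c e))).
  by apply: (Fmeet) => //; apply: (Fmeet).
rewrite omeet_distr; apply: ole_join.
- by apply: ole_trans f1b; apply: ole_meet2l; apply: ole_meetl.
- by apply: ole_trans f2b; apply: ole_meet2l; apply: ole_meetr.
Qed.

Lemma exists_dual_sep : exists p, [/\ in_dual p, p a & ~~ p b].
Proof.
have [M [PM Mmax]] := Zorn_bigcup avoids_b_bigcup.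
have prime := maximal_avoids_b_prime PM Mmax.
have [[Fup Fmeet] Fb] := PM.
exists (fun e => `[< up M e >]); split; [split|..].
- move=> x y; apply/asboolP/orP => [/prime[] Fx|[] /asboolP Fx].
  + by left; apply/asboolP.
  + by right; apply/asboolP.
  + by apply: Fup Fx _; apply: ole_joinl.
  + by apply: Fup Fx _; apply: ole_joinr.
- move=> x y; apply/asboolP/andP => [Fxy|[/asboolP Fx /asboolP Fy]]; last exact: Fmeet.
  by split; apply/asboolP; apply: Fup Fxy _; [apply: ole_meetl|apply: ole_meetr].
- by apply/asboolP => F0; apply: Fb; apply: Fup F0 _; apply: ole0x.
- by apply/asboolP; left; apply: olex1.
- by apply/asboolP; left; apply: ole_refl.
- by apply/asboolP.
Qed.

End PrimeFilter.

Section Separation.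
Variable A : ockham.
Implicit Types (p q : A -> bool) (a b : A).

Lemma dual_inj a b : (forall p, in_dual p -> p a = p b) -> a = b.
Proof.
have ole_dual x y : (forall p, in_dual p -> p x = p y) -> ole x y.
  move=> pxy; apply: contrapT => /exists_dual_sep [p [dp px py]].
  by move: py; rewrite -(pxy p dp) px.
by move=> pab; apply: ole_anti; apply: ole_dual => // p dp; rewrite pab.
Qed.

Lemma exists_dual_of_neq0 a : a <> ozero A -> exists2 p, in_dual p & p a.
Proof.
move=> a0; have [|p [dp pa _]] := @exists_dual_sep A a (ozero A); last by exists p.
by rewrite /ole omeetx0 => /esym.
Qed.

Lemma exists_dual_of_neq a b : a <> b -> exists2 p, in_dual p & p a != p b.
Proof.
move=> ab; apply: contrapT => nsep; apply: ab; apply: dual_inj => p dp.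
by apply/eqP; apply: contrapT => pab; apply: nsep; exists p => //; apply/negP.
Qed.

End Separation.

Section DualOperator.
Variable A : ockham.
Implicit Types (p q : A -> bool) (a : A).

Definition ptle p q := forall a, p a ==> q a.

Lemma in_dual_g p : in_dual p -> in_dual (dual_g p).
Proof.
case=> pJ pM p0 p1; split=> [a b|a b||]; rewrite /dual_g.
- by rewrite og_join pM negb_and.
- by rewrite og_meet pJ negb_or.
- by rewrite og0 p1.
- by rewrite og1 p0.
Qed.

Lemma in_dual_iter n p : in_dual p -> in_dual (iter n (@dual_g A) p).
Proof. by move=> dp; elim: n => //= n IH; apply: in_dual_g. Qed.

Lemma dual_og p a : p (og a) = ~~ dual_g p a.
Proof. by rewrite /dual_g negbK. Qed.

Lemma dual_iter_og n p a : p (iter n (@og A) a) = odd n (+) iter n (@dual_g A) p a.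
Proof. by elim: n p => [|n IH] p //=; rewrite dual_og IH -iterSr /= -addNb. Qed.

Lemma ptle_dual_g p q : ptle p q -> ptle (dual_g q) (dual_g p).
Proof. by move=> pq a; rewrite /dual_g implybNN. Qed.

Lemma ptle_iter_dual_g p q n : ptle p q ->
  if odd n then ptle (iter n (@dual_g A) q) (iter n (@dual_g A) p)
  else ptle (iter n (@dual_g A) p) (iter n (@dual_g A) q).
Proof. by move=> pq; elim: n => //= n; case: (odd n) => /ptle_dual_g. Qed.

End DualOperator.

(** * Terms, and a discriminator term for odd cycles *)

Fixpoint tsubst (s : nat -> term) (t : term) : term :=
  match t with
  | tvar i => s i
  | tjoin a b => tjoin (tsubst s a) (tsubst s b)
  | tmeet a b => tmeet (tsubst s a) (tsubst s b)
  | tg a => tg (tsubst s a)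
  | tzero => tzero
  | tone => tone
  end.

Lemma eq_teval (A : ockham) (v w : nat -> A) t : v =1 w -> teval v t = teval w t.
Proof. by move=> vw; elim: t => //= [a -> b ->|a -> b ->|a ->]. Qed.

Lemma teval_subst (A : ockham) (v : nat -> A) s t :
  teval v (tsubst s t) = teval (fun i => teval v (s i)) t.
Proof. by elim: t => //= [a -> b ->|a -> b ->|a ->]. Qed.

Definition tgn n s := iter n tg s.

Lemma teval_tgn (A : ockham) (v : nat -> A) n s :
  teval v (tgn n s) = iter n (@og A) (teval v s).
Proof. by elim: n => //= n ->. Qed.

Lemma tvars_tgn k n s : tvars_lt k s -> tvars_lt k (tgn n s).
Proof. by elim: n. Qed.

Definition teven_join n s :=
  foldr (fun k acc => tjoin (tgn k.*2 s) acc) tzero (iota 0 n).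

Lemma tvars_teven_join k n s : tvars_lt k s -> tvars_lt k (teven_join n s).
Proof.
by move=> ks; rewrite /teven_join; elim: (iota 0 n) => //= j l IH; split=> //; apply: tvars_tgn.
Qed.

Lemma dual_teven_join (A : ockham) (p : A -> bool) (v : nat -> A) n s : in_dual p ->
  p (teval v (teven_join n s)) = has (fun k => p (iter k.*2 (@og A) (teval v s))) (iota 0 n).
Proof.
move=> dp; rewrite /teven_join; elim: (iota 0 n) => [|k l IH] /=; first exact: dual_zero.
by rewrite dual_join // IH teval_tgn.
Qed.

Lemma odd_double_mod m r : odd m -> r < m -> exists2 k, k < m & k.*2 %% m = r.
Proof.
move=> m_odd rm; case/boolP: (odd r) => r_odd.
- exists (r + m)./2; first lia.
  have -> : (r + m)./2.*2 = r + m.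
    by move: (odd_double_half (r + m)); rewrite oddD r_odd m_odd /= add0n.
  by rewrite modnDr modn_small.
- exists r./2; first lia.
  have -> : r./2.*2 = r by move: (odd_double_half r); rewrite (negbTE r_odd) add0n.
  by rewrite modn_small.
Qed.

Section OddCycleDiscriminator.
Variables (A : ockham) (m : nat) (phi : (A -> bool) -> 'I_m) (L : nat).
Hypotheses (phi_iso : dual_iso_Cm phi) (m_odd : odd m) (L_odd : odd L) (m_dvd_L : m %| L).
Local Notation gD := (@dual_g A).

Lemma phi_iter n p : in_dual p -> phi (iter n gD p) = (phi p + n) %% m :> nat.
Proof.
case: phi_iso => _ _ _ _ phi_g dp; elim: n => [|n IH] /=; first by rewrite addn0 modn_small.
rewrite phi_g; last exact: in_dual_iter.
by rewrite IH -[in LHS]addn1 modnDml addn1 addnS.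
Qed.

Lemma eq_dual_phi p q : in_dual p -> in_dual q -> phi p = phi q :> nat -> p =1 q.
Proof. by case: phi_iso => phi_inj _ _ _ _ dp dq /val_inj; apply: phi_inj. Qed.

Lemma iter_dual_g_L p : in_dual p -> iter L gD p =1 p.
Proof.
move=> dp; apply: (eq_dual_phi (in_dual_iter _ dp) dp); rewrite phi_iter //.
by case/dvdnP: m_dvd_L => k ->; rewrite addnC modnMDl modn_small.
Qed.

Lemma dual_iter_og_L p a : in_dual p -> p (iter L (@og A) a) = ~~ p a.
Proof. by move=> dp; rewrite dual_iter_og L_odd iter_dual_g_L. Qed.

(* 2 is invertible modulo the odd period [m], so even iterates reach every point. *)
Lemma iter_double_dual_g_onto p q : in_dual p -> in_dual q ->
  exists2 k, k < m & iter k.*2 gD p =1 q.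
Proof.
move=> dp dq; have m_gt0 : 0 < m by case: (m) m_odd.
have [k km k2] := @odd_double_mod m ((phi q + (m - phi p)) %% m) m_odd (ltn_pmod _ m_gt0).
exists k => //; apply: (eq_dual_phi (in_dual_iter _ dp) dq); rewrite phi_iter //.
rewrite -modnDmr k2 modnDmr addnCA subnKC ?modnDr ?modn_small //.
exact: ltnW.
Qed.

Lemma dual_teven_join_L p (v : nat -> A) s : in_dual p ->
  p (teval v (teven_join L s)) = `[< teval v s <> ozero A >].
Proof.
move=> dp; rewrite dual_teven_join //; apply/hasP/asboolP.
- case=> k _; rewrite dual_iter_og odd_double => pk s0; move: pk; rewrite s0.
  by rewrite dual_zero //; apply: in_dual_iter.
- move=> /exists_dual_of_neq0 [q dq qs]; have [k km pq] := iter_double_dual_g_onto dp dq.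
  exists k; last by rewrite dual_iter_og odd_double /= pq.
  rewrite mem_iota add0n; apply: leq_trans km (dvdn_leq _ m_dvd_L).
  by case: (L) L_odd.
Qed.

Definition tsym_diff x y := tjoin (tmeet x (tgn L y)) (tmeet (tgn L x) y).

Lemma dual_tsym_diff p (v : nat -> A) x y : in_dual p ->
  p (teval v (tsym_diff x y)) = (p (teval v x) != p (teval v y)).
Proof.
move=> dp; rewrite /= dual_join // !dual_meet // !teval_tgn !dual_iter_og_L //.
by case: (p (teval v x)); case: (p (teval v y)).
Qed.

(* [tdiff] evaluates to [1] when [x <> y] and to [0] when [x = y]. *)
Definition tdiff := teven_join L (tsym_diff (tvar 0) (tvar 1)).

Definition tdisc := tjoin (tmeet (tvar 0) tdiff) (tmeet (tvar 2) (tgn L tdiff)).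

Lemma tvars_tdisc : tvars_lt 3 tdisc.
Proof.
have tdiff3 : tvars_lt 3 tdiff by apply: tvars_teven_join; do !split => //; apply: tvars_tgn.
by do !split => //; apply: tvars_tgn.
Qed.

Lemma dual_tdiff p (x y z : A) : in_dual p ->
  p (teval (assign3 x y z) tdiff) = `[< x <> y >].
Proof.
move=> dp; rewrite dual_teven_join_L //; apply/asboolP/asboolP => [e0 xy|xy e0].
- apply: e0; apply: dual_inj => q dq; rewrite dual_zero //.
  by rewrite dual_tsym_diff //= xy eqxx.
- have [q dq qxy] := exists_dual_of_neq xy.
  by have := dual_tsym_diff (assign3 x y z) (tvar 0) (tvar 1) dq; rewrite e0 dual_zero //= qxy.
Qed.

Lemma tdisc_discriminator : induces_discriminator A tdisc.
Proof.
move=> x y z; have dual_tdisc p : in_dual p ->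
    p (teval (assign3 x y z) tdisc) = if `[< x <> y >] then p x else p z.
  move=> dp; rewrite /= dual_join // !dual_meet // teval_tgn dual_iter_og_L //.
  by rewrite dual_tdiff //; case: asboolP; rewrite ?andbT ?andbF ?orbF.
by split=> [xy|xy]; apply: dual_inj => p dp; rewrite dual_tdisc //; case: asboolP.
Qed.

End OddCycleDiscriminator.

(** * Discriminator laws *)

Section DiscriminatorLaws.
Variable t : term.

Definition tapp3 p q r := tsubst (fun i => match i with 0 => p | 1 => q | _ => r end) t.
Definition tswitch p q r s := tapp3 (tapp3 p q r) (tapp3 p q s) s.

Section Semantics.
Variable A : ockham.
Implicit Types a b c d e : A.

Definition disc a b c := teval (assign3 a b c) t.
Definition switch a b c d := disc (disc a b c) (disc a b d) d.

Lemma teval_tapp3 (v : nat -> A) p q r :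
  teval v (tapp3 p q r) = disc (teval v p) (teval v q) (teval v r).
Proof. by rewrite teval_subst; apply: eq_teval; case=> [|[|i]]. Qed.

Lemma teval_tswitch (v : nat -> A) p q r s :
  teval v (tswitch p q r s) = switch (teval v p) (teval v q) (teval v r) (teval v s).
Proof. by rewrite !teval_tapp3. Qed.

End Semantics.

Local Notation X := tvar.

Local Ltac teval_simpl := do 2!rewrite /= ?teval_tswitch ?teval_tapp3; rewrite /=.

(* The laws make [disc a b c = disc a b d] and [switch a b c d = c] congruences in [c, d]
   with trivial meet, the first one relating [a] and [b]. *)
Inductive disc_law : term -> term -> Prop :=
  | law_disc_xyx : disc_law (tapp3 (X 0) (X 1) (X 0)) (X 0)
  | law_disc_xyy : disc_law (tapp3 (X 0) (X 1) (X 1)) (X 0)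
  | law_disc_xxz : disc_law (tapp3 (X 0) (X 0) (X 1)) (X 1)
  | law_disc_join : disc_law (tapp3 (X 0) (X 1) (tjoin (X 2) (X 3)))
      (tapp3 (X 0) (X 1) (tjoin (tapp3 (X 0) (X 1) (X 2)) (tapp3 (X 0) (X 1) (X 3))))
  | law_disc_meet : disc_law (tapp3 (X 0) (X 1) (tmeet (X 2) (X 3)))
      (tapp3 (X 0) (X 1) (tmeet (tapp3 (X 0) (X 1) (X 2)) (tapp3 (X 0) (X 1) (X 3))))
  | law_disc_g : disc_law (tapp3 (X 0) (X 1) (tg (X 2)))
      (tapp3 (X 0) (X 1) (tg (tapp3 (X 0) (X 1) (X 2))))
  | law_switch_join : disc_law (tswitch (X 0) (X 1) (tjoin (X 2) (X 4)) (tjoin (X 3) (X 5)))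
      (tjoin (tswitch (X 0) (X 1) (X 2) (X 3)) (tswitch (X 0) (X 1) (X 4) (X 5)))
  | law_switch_meet : disc_law (tswitch (X 0) (X 1) (tmeet (X 2) (X 4)) (tmeet (X 3) (X 5)))
      (tmeet (tswitch (X 0) (X 1) (X 2) (X 3)) (tswitch (X 0) (X 1) (X 4) (X 5)))
  | law_switch_g : disc_law (tswitch (X 0) (X 1) (tg (X 2)) (tg (X 3)))
      (tg (tswitch (X 0) (X 1) (X 2) (X 3)))
  | law_switch_sym : disc_law (tswitch (X 0) (X 1) (X 3) (tswitch (X 0) (X 1) (X 2) (X 3))) (X 3)
  | law_switch_trans : disc_law (tswitch (X 0) (X 1) (X 2) (tswitch (X 0) (X 1) (X 3) (X 4)))
      (tswitch (X 0) (X 1) (X 2) (X 4))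
  | law_switch_disc : disc_law
      (tswitch (X 0) (X 1) (tapp3 (X 0) (X 1) (X 3)) (tswitch (X 0) (X 1) (X 2) (X 3))) (X 3)
  | law_switch_refl : disc_law (tswitch (X 0) (X 1) (X 2) (X 2)) (X 2)
  | law_switch_xdisc : disc_law (tswitch (X 0) (X 1) (X 0) (tapp3 (X 0) (X 1) (X 2))) (X 0).

Definition disc_laws (A : ockham) := forall l r, disc_law l r -> satisfies A l r.

Section Discriminator.
Variable A : ockham.
Hypothesis tA : induces_discriminator A t.
Implicit Types a b c d : A.

Lemma disc_eq a c : disc a a c = c. Proof. exact: (tA a a c).2. Qed.

Lemma disc_neq a b c : a <> b -> disc a b c = a. Proof. exact: (tA a b c).1. Qed.

Lemma discE a b c : disc a b c = if `[< a = b >] then c else a.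
Proof. by case: asboolP => [<-|/disc_neq]; rewrite ?disc_eq. Qed.

Lemma switchE a b c d : switch a b c d = if `[< a = b >] then c else d.
Proof.
rewrite /switch; case: asboolP => [<-|ab].
  by rewrite !disc_eq discE; case: asboolP.
by rewrite (disc_neq c ab) (disc_neq d ab) disc_eq.
Qed.

Lemma disc_laws_of_discriminator : disc_laws A.
Proof.
by move=> l r [] v; teval_simpl; rewrite !(switchE, discE); case: asboolP => // ->.
Qed.

End Discriminator.

Section SubdirectlyIrreducible.
Variable A : ockham.
Hypothesis lawsA : disc_laws A.
Implicit Types a b c d e : A.

Let law_at l r (s : seq A) : disc_law l r ->
  teval (fun i => nth (ozero A) s i) l = teval (fun i => nth (ozero A) s i) r.
Proof. by move=> lr; apply: lawsA. Qed.

Local Ltac law_at L s := by have := law_at s L; teval_simpl => ->.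

Lemma disc_xyx a b : disc a b a = a. Proof. law_at law_disc_xyx [:: a; b]. Qed.
Lemma disc_xyy a b : disc a b b = a. Proof. law_at law_disc_xyy [:: a; b]. Qed.
Lemma disc_xxz a c : disc a a c = c. Proof. law_at law_disc_xxz [:: a; c]. Qed.

Lemma disc_join a b c c' :
  disc a b (ojoin c c') = disc a b (ojoin (disc a b c) (disc a b c')).
Proof. law_at law_disc_join [:: a; b; c; c']. Qed.

Lemma disc_meet a b c c' :
  disc a b (omeet c c') = disc a b (omeet (disc a b c) (disc a b c')).
Proof. law_at law_disc_meet [:: a; b; c; c']. Qed.

Lemma disc_g a b c : disc a b (og c) = disc a b (og (disc a b c)).
Proof. law_at law_disc_g [:: a; b; c]. Qed.

Lemma switch_join a b c d c' d' :
  switch a b (ojoin c c') (ojoin d d') = ojoin (switch a b c d) (switch a b c' d').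
Proof. law_at law_switch_join [:: a; b; c; d; c'; d']. Qed.

Lemma switch_meet a b c d c' d' :
  switch a b (omeet c c') (omeet d d') = omeet (switch a b c d) (switch a b c' d').
Proof. law_at law_switch_meet [:: a; b; c; d; c'; d']. Qed.

Lemma switch_g a b c d : switch a b (og c) (og d) = og (switch a b c d).
Proof. law_at law_switch_g [:: a; b; c; d]. Qed.

Lemma switch_sym a b c d : switch a b d (switch a b c d) = d.
Proof. law_at law_switch_sym [:: a; b; c; d]. Qed.

Lemma switch_trans a b c d e : switch a b c (switch a b d e) = switch a b c e.
Proof. law_at law_switch_trans [:: a; b; c; d; e]. Qed.

Lemma switch_disc a b c d : switch a b (disc a b d) (switch a b c d) = d.
Proof. law_at law_switch_disc [:: a; b; c; d]. Qed.

Lemma switch_refl a b c : switch a b c c = c.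
Proof. law_at law_switch_refl [:: a; b; c]. Qed.

Lemma switch_xdisc a b c : switch a b a (disc a b c) = a.
Proof. law_at law_switch_xdisc [:: a; b; c]. Qed.

Lemma disc_kernel_congruence a b : congruence (fun c d => disc a b c = disc a b d).
Proof.
split=> //.
- by split=> [c d ->|c d e -> ->].
- by move=> c d c' d' cc' dd'; rewrite disc_join cc' dd' -disc_join.
- by move=> c d c' d' cc' dd'; rewrite disc_meet cc' dd' -disc_meet.
- by move=> c c' cc'; rewrite disc_g cc' -disc_g.
Qed.

Lemma switch_congruence a b : congruence (fun c d => switch a b c d = c).
Proof.
split.
- exact: switch_refl.
- split=> [c d cd|c d e cd de]; first by rewrite -{1}cd switch_sym.
  by rewrite -(switch_trans _ _ c d e) de cd.
- by move=> c d c' d' cc' dd'; rewrite switch_join cc' dd'.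
- by move=> c d c' d' cc' dd'; rewrite switch_meet cc' dd'.
- by move=> c c' cc'; rewrite switch_g cc'.
Qed.

Lemma disc_kernel_switch_trivial a b c d :
  disc a b c = disc a b d -> switch a b c d = c -> c = d.
Proof.
move=> disc_cd switch_cd; have := switch_disc a b c d; rewrite switch_cd -disc_cd => <-.
by rewrite -{1}(switch_disc a b c c) switch_refl.
Qed.

(* When [a <> b], the first congruence contains the monolith, so the second one, which
   meets it trivially, is the identity; and it relates [a] with [disc a b c]. *)
Lemma discriminator_of_disc_laws : subdirectly_irreducible A -> induces_discriminator A t.
Proof.
case=> p [q [pq monolith]] a b c; split=> [ab|<-]; last exact: disc_xxz.
have disc_pq : disc a b p = disc a b q.
  apply: (monolith _ (disc_kernel_congruence a b)); exists a, b.
  by rewrite disc_xyx disc_xyy.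
have switch_id c' d : switch a b c' d = c' -> c' = d.
  move=> cd; apply: contrapT => ncd; apply: pq; apply: disc_kernel_switch_trivial disc_pq _.
  by apply: (monolith _ (switch_congruence a b)); exists c', d.
by apply/esym/switch_id; apply: switch_xdisc.
Qed.

End SubdirectlyIrreducible.

End DiscriminatorLaws.

Lemma satisfies_generated E B (A : ockham) l r : generated_by E B -> in_variety E A ->
  (forall A', List.In A' B -> satisfies A' l r) -> satisfies A l r.
Proof. by move=> gen /gen; apply. Qed.

Lemma common_odd_period (B : seq ockham) :
  (forall A, List.In A B -> exists m, odd m /\ dual_isomorphic_Cm A m) ->
  exists2 L, odd L & forall A, List.In A B ->
    exists m (phi : (A -> bool) -> 'I_m), [/\ odd m, dual_iso_Cm phi & m %| L].
Proof.
elim: B => [|A B IH] cycles; first by exists 1.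
have [|L L_odd periods] := IH; first by move=> A' BA'; apply: cycles; right.
have [m [m_odd [phi phi_iso]]] := cycles A (or_introl erefl).
exists (L * m); first by rewrite oddM L_odd m_odd.
move=> A' [<-|/periods [m' [phi' [m'_odd phi'_iso m'L]]]].
- by exists m, phi; split=> //; apply: dvdn_mull.
- by exists m', phi'; split=> //; apply: dvdn_mulr.
Qed.

Lemma discriminator_variety_of_odd_cycles E B : generated_by E B ->
  (forall A, List.In A B -> exists m, odd m /\ dual_isomorphic_Cm A m) ->
  discriminator_variety E.
Proof.
move=> gen /common_odd_period [L L_odd periods].
exists (tdisc L); split=> [|A EA SIA]; first exact: tvars_tdisc.
apply: discriminator_of_disc_laws SIA => l r lr.
apply: satisfies_generated gen EA _ => A' /periods [m [phi [m_odd phi_iso mL]]].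
exact: disc_laws_of_discriminator (tdisc_discriminator phi_iso m_odd L_odd mL) _ _ lr.
Qed.

(** * The algebras of subsets of the cycles *)

Section CycleAlgebra.
Variable n : nat.
Local Notation T := ('I_n -> bool).

Definition cyc_join (f h : T) : T := fun i => f i || h i.
Definition cyc_meet (f h : T) : T := fun i => f i && h i.
Definition cyc_g (f : T) : T := fun i => ~~ f (ordS i).
Definition cyc_zero : T := fun=> false.
Definition cyc_one : T := fun=> true.

Local Ltac pointwise := move=> *; apply: funext => i;
  rewrite /cyc_join /cyc_meet /cyc_g /cyc_zero /cyc_one.

Lemma cyc_joinC f h : cyc_join f h = cyc_join h f. Proof. by pointwise; rewrite orbC. Qed.
Lemma cyc_meetC f h : cyc_meet f h = cyc_meet h f. Proof. by pointwise; rewrite andbC. Qed.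
Lemma cyc_joinA f h k : cyc_join f (cyc_join h k) = cyc_join (cyc_join f h) k.
Proof. by pointwise; rewrite orbA. Qed.
Lemma cyc_meetA f h k : cyc_meet f (cyc_meet h k) = cyc_meet (cyc_meet f h) k.
Proof. by pointwise; rewrite andbA. Qed.
Lemma cyc_join_absorb f h : cyc_join f (cyc_meet f h) = f. Proof. by pointwise; case: (f i). Qed.
Lemma cyc_meet_absorb f h : cyc_meet f (cyc_join f h) = f. Proof. by pointwise; case: (f i). Qed.
Lemma cyc_meet_distr f h k : cyc_meet f (cyc_join h k) = cyc_join (cyc_meet f h) (cyc_meet f k).
Proof. by pointwise; rewrite andb_orr. Qed.
Lemma cyc_join0 f : cyc_join f cyc_zero = f. Proof. by pointwise; rewrite orbF. Qed.
Lemma cyc_meet1 f : cyc_meet f cyc_one = f. Proof. by pointwise; rewrite andbT. Qed.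
Lemma cyc_g_join f h : cyc_g (cyc_join f h) = cyc_meet (cyc_g f) (cyc_g h).
Proof. by pointwise; rewrite negb_or. Qed.
Lemma cyc_g_meet f h : cyc_g (cyc_meet f h) = cyc_join (cyc_g f) (cyc_g h).
Proof. by pointwise; rewrite negb_and. Qed.
Lemma cyc_g0 : cyc_g cyc_zero = cyc_one. Proof. by pointwise. Qed.
Lemma cyc_g1 : cyc_g cyc_one = cyc_zero. Proof. by pointwise. Qed.

(* The Ockham algebra of all subsets of [C_n], i.e. the algebra whose dual is [C_n]. *)
Definition cycle_algebra : ockham :=
  Ockham cyc_joinC cyc_meetC cyc_joinA cyc_meetA cyc_join_absorb cyc_meet_absorb
    cyc_meet_distr cyc_join0 cyc_meet1 cyc_g_join cyc_g_meet cyc_g0 cyc_g1.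

End CycleAlgebra.

Section CycleAlgebraDual.
Variable n : nat.
Local Notation C := (cycle_algebra n.+1).

Definition cyc_atom (i : 'I_n.+1) : C := pred1 i.
Definition cyc_eval (i : 'I_n.+1) : C -> bool := fun f => f i.

Lemma in_dual_cyc_eval i : in_dual (cyc_eval i). Proof. by split. Qed.

Lemma cyc_dual_eval (x : C -> bool) : in_dual x -> exists i, x = cyc_eval i.
Proof.
move=> dx; have [i xi] : exists i, x (cyc_atom i).
  have one_atoms : oone C = foldr (fun i f => ojoin (cyc_atom i) f) (ozero C) (enum 'I_n.+1).
    apply: funext => j; have : j \in enum 'I_n.+1 by rewrite mem_enum.
    by elim: (enum _) => //= i s IH; rewrite inE /cyc_join /cyc_atom /= => /orP[->|/IH <-].
  have : x (oone C) by rewrite dual_one.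
  rewrite one_atoms; elim: (enum _) => [|i s IH] /=; first by rewrite dual_zero.
  by rewrite dual_join // => /orP[xi|/IH //]; exists i.
exists i; apply: funext => f; rewrite /cyc_eval; case/boolP: (f i) => fi.
- have atom_le : omeet (cyc_atom i) f = cyc_atom i.
    by apply: funext => j; rewrite /= /cyc_meet /cyc_atom /=; case: eqP => // ->.
  by move: xi; rewrite -atom_le dual_meet // => /andP[].
- have atom_disj : omeet f (cyc_atom i) = ozero C.
    apply: funext => j; rewrite /= /cyc_meet /cyc_atom /cyc_zero /=.
    by case: eqP => [->|]; rewrite ?andbF // (negbTE fi).
  apply/negbTE/negP => xf.
  by move: (dual_zero dx); rewrite -atom_disj dual_meet // xf xi.
Qed.

Definition cyc_index (x : C -> bool) : 'I_n.+1 :=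
  if [pick i | x (cyc_atom i)] is Some i then i else ord0.

Lemma cyc_indexK i : cyc_index (cyc_eval i) = i.
Proof.
rewrite /cyc_index; case: pickP => [j|/(_ i)]; rewrite /cyc_eval /cyc_atom /=.
  by move=> /eqP.
by rewrite eqxx.
Qed.

Lemma cyc_index_eval x : in_dual x -> x = cyc_eval (cyc_index x).
Proof. by move=> /cyc_dual_eval [i ->]; rewrite cyc_indexK. Qed.

Lemma cycle_algebra_dual : dual_isomorphic_Cm C n.+1.
Proof.
exists cyc_index; split.
- by move=> x y dx dy xy a; rewrite (cyc_index_eval dx) (cyc_index_eval dy) xy.
- by move=> i; exists (cyc_eval i); [apply: in_dual_cyc_eval|apply: cyc_indexK].
- move=> x y dx dy; rewrite {1}(cyc_index_eval dx) {1}(cyc_index_eval dy).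
  split=> [/(_ (cyc_atom (cyc_index x)))|->]; last by move=> a; apply: implybb.
  by rewrite /cyc_eval /cyc_atom /= eqxx => /eqP.
- move=> i x dx xi; exists [:: cyc_atom i] => y dy /(_ _ (or_introl erefl)).
  rewrite {1}(cyc_index_eval dx) {1}(cyc_index_eval dy) xi /cyc_eval /cyc_atom /= eqxx.
  by move/eqP.
- move=> x dx; rewrite (cyc_index_eval dx).
  have -> : dual_g (cyc_eval (cyc_index x)) = cyc_eval (ordS (cyc_index x)).
    by apply: funext => f; rewrite /dual_g /cyc_eval /= /cyc_g negbK.
  by rewrite !cyc_indexK.
Qed.

End CycleAlgebraDual.

(** * Homomorphisms and subdirectly irreducible quotients *)

Definition is_hom (A A' : ockham) (f : A -> A') :=
  [/\ forall a b, f (ojoin a b) = ojoin (f a) (f b),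
      forall a b, f (omeet a b) = omeet (f a) (f b),
      forall a, f (og a) = og (f a),
      f (ozero A) = ozero A' & f (oone A) = oone A'].

Section Homomorphisms.
Variables (A A' : ockham) (f : A -> A').
Hypothesis f_hom : is_hom f.

Lemma hom_teval (v : nat -> A) t : f (teval v t) = teval (f \o v) t.
Proof.
by case: f_hom => fJ fM fg f0 f1; elim: t => //= [a <- b <-|a <- b <-|a <-].
Qed.

Lemma satisfies_hom_inj l r : injective f -> satisfies A' l r -> satisfies A l r.
Proof. by move=> f_inj A'lr v; apply: f_inj; rewrite !hom_teval A'lr. Qed.

Lemma in_variety_hom_onto E : (forall y, exists x, f x = y) ->
  in_variety E A -> in_variety E A'.
Proof.
move=> f_onto EA l r lr v; pose w i := sval (cid (f_onto (v i))).
have -> : v = f \o w by apply: funext => i; rewrite /w /=; case: cid.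
by rewrite -!hom_teval (EA l r lr).
Qed.

End Homomorphisms.

Lemma congruence_pullback (A A' : ockham) (f : A -> A') (th : A' -> A' -> Prop) :
  is_hom f -> congruence th -> congruence (fun a b => th (f a) (f b)).
Proof.
case=> fJ fM fg _ _ [th_refl [th_sym th_trans] thJ thM thg]; split=> //.
- by split=> [a b|a b c]; [apply: th_sym|apply: th_trans].
- by move=> a b a' b' aa' bb'; rewrite !fJ; apply: thJ.
- by move=> a b a' b' aa' bb'; rewrite !fM; apply: thM.
- by move=> a a' aa'; rewrite !fg; apply: thg.
Qed.

Section Quotient.
Variables (A : ockham) (th : A -> A -> Prop).
Hypothesis th_cong : congruence th.

Definition qcarrier := {P : A -> Prop | exists a, P = th a}.
Definition qclass (a : A) : qcarrier := exist _ (th a) (ex_intro _ a erefl).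

Lemma qclass_eq a b : qclass a = qclass b <-> th a b.
Proof.
case: th_cong => th_refl [th_sym th_trans] _ _ _; split=> [/(congr1 sval) /= ab|ab].
  by have := th_refl a; rewrite ab => /th_sym.
apply: eq_exist; apply: funext => c; apply: propext.
by split=> [ac|bc]; [apply: th_trans (th_sym _ _ ab) ac|apply: th_trans ab bc].
Qed.

Lemma qclass_onto (q : qcarrier) : exists a, qclass a = q.
Proof. by case: q => P [a Pa]; exists a; apply: eq_exist. Qed.

Lemma qcarrier_ind (P : qcarrier -> Prop) : (forall a, P (qclass a)) -> forall q, P q.
Proof. by move=> Pa q; have [a <-] := qclass_onto q. Qed.

Definition qrepr (q : qcarrier) : A := sval (cid (qclass_onto q)).

Lemma qreprK q : qclass (qrepr q) = q.
Proof. exact: (svalP (cid (qclass_onto q))). Qed.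

Lemma th_qrepr a : th (qrepr (qclass a)) a.
Proof. by apply/qclass_eq; rewrite qreprK. Qed.

Definition qjoin p q := qclass (ojoin (qrepr p) (qrepr q)).
Definition qmeet p q := qclass (omeet (qrepr p) (qrepr q)).
Definition qg p := qclass (og (qrepr p)).
Definition qzero := qclass (ozero A).
Definition qone := qclass (oone A).

Lemma qjoinE a b : qjoin (qclass a) (qclass b) = qclass (ojoin a b).
Proof. by case: th_cong => _ _ thJ _ _; apply/qclass_eq; apply: thJ; apply: th_qrepr. Qed.
Lemma qmeetE a b : qmeet (qclass a) (qclass b) = qclass (omeet a b).
Proof. by case: th_cong => _ _ _ thM _; apply/qclass_eq; apply: thM; apply: th_qrepr. Qed.
Lemma qgE a : qg (qclass a) = qclass (og a).
Proof. by case: th_cong => _ _ _ _ thg; apply/qclass_eq; apply: thg; apply: th_qrepr. Qed.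

Local Ltac lift_axiom ax :=
  repeat match goal with x : qcarrier |- _ => revert x end;
  do ![elim/qcarrier_ind=> ?]; rewrite ?(qjoinE, qmeetE, qgE) ax ?(qjoinE, qmeetE, qgE).

Lemma qjoinC x y : qjoin x y = qjoin y x. Proof. by lift_axiom ojoinC. Qed.
Lemma qmeetC x y : qmeet x y = qmeet y x. Proof. by lift_axiom omeetC. Qed.
Lemma qjoinA x y z : qjoin x (qjoin y z) = qjoin (qjoin x y) z. Proof. by lift_axiom ojoinA. Qed.
Lemma qmeetA x y z : qmeet x (qmeet y z) = qmeet (qmeet x y) z. Proof. by lift_axiom omeetA. Qed.
Lemma qjoin_absorb x y : qjoin x (qmeet x y) = x. Proof. by lift_axiom ojoin_absorb. Qed.
Lemma qmeet_absorb x y : qmeet x (qjoin x y) = x. Proof. by lift_axiom omeet_absorb. Qed.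
Lemma qmeet_distr x y z : qmeet x (qjoin y z) = qjoin (qmeet x y) (qmeet x z).
Proof. by lift_axiom omeet_distr. Qed.
Lemma qjoin0 x : qjoin x qzero = x. Proof. by lift_axiom ojoin0. Qed.
Lemma qmeet1 x : qmeet x qone = x. Proof. by lift_axiom omeet1. Qed.
Lemma qg_join x y : qg (qjoin x y) = qmeet (qg x) (qg y). Proof. by lift_axiom og_join. Qed.
Lemma qg_meet x y : qg (qmeet x y) = qjoin (qg x) (qg y). Proof. by lift_axiom og_meet. Qed.
Lemma qg0 : qg qzero = qone. Proof. by rewrite qgE og0. Qed.
Lemma qg1 : qg qone = qzero. Proof. by rewrite qgE og1. Qed.

Definition quotient : ockham :=
  Ockham qjoinC qmeetC qjoinA qmeetA qjoin_absorb qmeet_absorb qmeet_distr qjoin0 qmeet1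
    qg_join qg_meet qg0 qg1.

Lemma qclass_hom : is_hom (qclass : A -> quotient).
Proof. by split=> [a b|a b|a||]; rewrite /= ?qjoinE ?qmeetE ?qgE. Qed.

End Quotient.

Section SubdirectlyIrreducibleQuotient.
Variables (A : ockham) (s u : A).
Hypothesis su : s <> u.

(* Relations are encoded as [X : set (A * A)] plus the diagonal, so that the union of
   the empty chain is harmless in Zorn's lemma. *)
Let rel_of (X : set (A * A)) (a b : A) := a = b \/ X (a, b).
Let separates (X : set (A * A)) := congruence (rel_of X) /\ ~ rel_of X s u.

Lemma separates_bigcup (C : set (set (A * A))) :
  C `<=` separates -> total_on C subset -> separates (\bigcup_(X in C) X).
Proof.
move=> CP Ctot; set U := \bigcup_(X in C) X.
have lift X a b : C X -> rel_of X a b -> rel_of U a b.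
  by move=> CX [->|Xab]; [left|right; exists X].
have common a b c d : rel_of U a b -> rel_of U c d ->
    (a = b /\ c = d) \/ exists2 X, C X & rel_of X a b /\ rel_of X c d.
  case=> [ab|[X CX Xab]] [cd|[Y CY Ycd]]; first by left.
  - by right; exists Y => //; split; [left|right].
  - by right; exists X => //; split; [right|left].
  - have [XY|YX] := Ctot X Y CX CY; [right; exists Y|right; exists X] => //.
    + by split; right=> //; apply: XY.
    + by split; right=> //; apply: YX.
have binary (op : A -> A -> A) :
    (forall X, C X -> forall a b a' b', rel_of X a a' -> rel_of X b b' ->
       rel_of X (op a b) (op a' b')) ->
    forall a b a' b', rel_of U a a' -> rel_of U b b' -> rel_of U (op a b) (op a' b').
  move=> opX a b a' b' /common /[apply] [[[-> ->]|[X CX [aa' bb']]]]; first by left.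
  by apply: (lift X) => //; apply: opX.
split; last by case=> [//|[X CX Xsu]]; apply: (CP X CX).2; right.
split.
- by move=> a; left.
- split=> [a b [->|[X CX Xab]]|a b c ab bc]; first by left.
    have [_ [X_sym _] _ _ _] := (CP X CX).1.
    by apply: (lift X) => //; apply: X_sym; right.
  case: (common _ _ _ _ ab bc) => [[-> ->]|[X CX [Xab Xbc]]]; first by left.
  have [_ [_ X_trans] _ _ _] := (CP X CX).1.
  by apply: (lift X) => //; apply: X_trans Xab Xbc.
- by apply: binary => X /CP [[_ _ cJ _ _] _].
- by apply: binary => X /CP [[_ _ _ cM _] _].
- move=> a a' [->|[X CX Xaa']]; first by left.
  have [_ _ _ _ X_g] := (CP X CX).1.
  by apply: (lift X) => //; apply: X_g; right.
Qed.

Lemma exists_maximal_separating_congruence : exists th, [/\ congruence th, ~ th s u &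
  forall th', congruence th' -> (forall a b, th a b -> th' a b) -> ~ th' s u ->
    forall a b, th' a b -> th a b].
Proof.
have [M [[cM Msu] Mmax]] := Zorn_bigcup separates_bigcup.
exists (rel_of M); split=> // th' cth' sub th'su a b th'ab; apply: contrapT => Mab.
have th'E x y : rel_of (fun p => th' p.1 p.2) x y <-> th' x y.
  by split=> [[->|//]|]; [case: cth'|right].
apply: (Mmax (fun p => th' p.1 p.2)); last first.
  split; last by move/th'E.
  case: cth' => th'_refl [th'_sym th'_trans] th'J th'M th'g; split.
  - by move=> x; apply/th'E.
  - by split=> [x y /th'E xy|x y z /th'E xy /th'E yz]; apply/th'E;
      [apply: th'_sym|apply: th'_trans xy yz].
  - by move=> x y x' y' /th'E xx' /th'E yy'; apply/th'E; apply: th'J.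
  - by move=> x y x' y' /th'E xx' /th'E yy'; apply/th'E; apply: th'M.
  - by move=> x x' /th'E xx'; apply/th'E; apply: th'g.
split=> [[x y] Mxy|M_th']; first by apply: sub; right.
by apply: Mab; right; apply: (M_th' (a, b)).
Qed.

End SubdirectlyIrreducibleQuotient.

Lemma quotient_SI (A : ockham) (s u : A) (th : A -> A -> Prop) (th_cong : congruence th) :
  ~ th s u ->
  (forall th', congruence th' -> (forall a b, th a b -> th' a b) -> ~ th' s u ->
    forall a b, th' a b -> th a b) ->
  subdirectly_irreducible (quotient th_cong).
Proof.
move=> th_su th_max; exists (qclass th s), (qclass th u).
split=> [/(qclass_eq th_cong)//|phi phi_cong [x [y [phi_xy xy]]]].
have phi'_cong := congruence_pullback (qclass_hom th_cong) phi_cong.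
apply: contrapT => phi_su; move: phi_xy xy.
elim/qcarrier_ind: x => a; elim/qcarrier_ind: y => b phi_ab ab.
apply: ab; apply/(qclass_eq th_cong); apply: (th_max _ phi'_cong) phi_ab => // c d.
by move/(qclass_eq th_cong) => ->; case: phi_cong.
Qed.

Lemma exists_SI_quotient (A : ockham) (s u : A) : s <> u ->
  exists (Q : ockham) (f : A -> Q),
    [/\ is_hom f, forall y, exists x, f x = y, f s <> f u & subdirectly_irreducible Q].
Proof.
move=> su; have [th [th_cong th_su th_max]] := exists_maximal_separating_congruence su.
exists (quotient th_cong), (qclass th); split.
- exact: qclass_hom.
- exact: qclass_onto.
- by move/(qclass_eq th_cong).
- exact: quotient_SI th_su th_max.
Qed.

(** * Subdirectly irreducible algebras with a discriminator term *)

Fixpoint gdepth (t : term) : nat :=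
  match t with
  | tvar _ | tzero | tone => 0
  | tjoin a b | tmeet a b => maxn (gdepth a) (gdepth b)
  | tg a => (gdepth a).+1
  end.

Section TwistedOrder.
Variable A : ockham.
Local Notation gD := (@dual_g A).

(* [og] reverses order, so the comparison of the [n]-th iterates flips with the parity
   of [n]. *)
Definition twisted_le n (p q : A -> bool) (x y : A) :=
  if odd n then iter n gD q y ==> iter n gD p x else iter n gD p x ==> iter n gD q y.

Lemma twisted_le_refl n p x : twisted_le n p p x x.
Proof. by rewrite /twisted_le; case: ifP => _; apply: implybb. Qed.

Lemma twisted_le_dual_g n p q x y :
  twisted_le n.+1 p q x y = twisted_le n (dual_g q) (dual_g p) y x.
Proof. by rewrite /twisted_le /= -!iterSr; case: (odd n). Qed.

Lemma teval_twisted_mono t p q (v w : nat -> A) : in_dual p -> in_dual q ->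
  (forall j n, n <= gdepth t -> twisted_le n p q (v j) (w j)) ->
  p (teval v t) ==> q (teval w t).
Proof.
elim: t p q v w => [j|a IHa b IHb|a IHa b IHb|a IHa||] p q v w dp dq vw /=.
- exact: (vw j 0).
- have /implyP pqa := IHa p q v w dp dq (fun j n n_le => vw j n (leq_trans n_le (leq_maxl _ _))).
  have /implyP pqb := IHb p q v w dp dq (fun j n n_le => vw j n (leq_trans n_le (leq_maxr _ _))).
  by rewrite !dual_join //; apply/implyP => /orP[/pqa|/pqb] ->; rewrite ?orbT.
- have /implyP pqa := IHa p q v w dp dq (fun j n n_le => vw j n (leq_trans n_le (leq_maxl _ _))).
  have /implyP pqb := IHb p q v w dp dq (fun j n n_le => vw j n (leq_trans n_le (leq_maxr _ _))).
  by rewrite !dual_meet //; apply/implyP => /andP[/pqa -> /pqb ->].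
- rewrite !dual_og implybNN; apply: IHa (in_dual_g dq) (in_dual_g dp) _ => j n n_le.
  by rewrite -twisted_le_dual_g; apply: vw.
- by rewrite dual_zero.
- by rewrite (dual_one dq) implybT.
Qed.

End TwistedOrder.

Section OrbitsOfDiscriminatorAlgebra.
Variables (S : ockham) (t : term).
Hypothesis t_disc : induces_discriminator S t.
Local Notation d := (gdepth t).
Local Notation W y n := (iter n (@dual_g S) y).

Lemma twisted_le_eq (y : S -> bool) p q : in_dual y ->
  (forall n, n <= d -> twisted_le n y y p q) -> p = q.
Proof.
move=> dy pq; apply: contrapT => p_neq_q.
have y_p r : y p ==> y r.
  have := @teval_twisted_mono _ t y y (assign3 p q r) (assign3 q q r) dy dy.
  rewrite (t_disc p q r).1 // (t_disc q q r).2 //; apply.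
  by case=> [|[|j]] n n_le; [apply: pq|apply: twisted_le_refl..].
suff /implyP/(_ isT) yp : true ==> y p by have := y_p (ozero S); rewrite dual_zero // yp.
have := @teval_twisted_mono _ t y y (assign3 p p (oone S)) (assign3 p q (oone S)) dy dy.
rewrite (t_disc p p (oone S)).2 // (t_disc p q (oone S)).1 // dual_one //; apply.
by case=> [|[|j]] n n_le; [apply: twisted_le_refl|apply: pq|apply: twisted_le_refl].
Qed.

Lemma orbit_separates (y : S -> bool) a c (b : bool) : in_dual y -> omeet a c <> a ->
  exists2 n, n <= d & [&& odd n == b, W y n a & ~~ W y n c].
Proof.
move=> dy ac; apply: contrapT => no_sep; have dW n : in_dual (W y n) by apply: in_dual_iter.
have sep n : n <= d -> odd n = b -> W y n a ==> W y n c.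
  move=> n_le n_odd; apply/implyP => Wa; apply: contrapT => /negP Wc.
  by apply: no_sep; exists n; rewrite // n_odd eqxx Wa Wc.
case: b {no_sep} sep => sep; apply: ac; [|apply: esym]; apply: (twisted_le_eq dy) => n n_le;
  rewrite /twisted_le dual_meet //; case: ifP => n_odd; apply/implyP; try by case/andP.
all: by move=> Wa; move/implyP: (sep n n_le n_odd) => /(_ Wa) ->; rewrite Wa.
Qed.

Lemma separating_pair (y F : S -> bool) (ns : seq nat) : in_dual y -> in_dual F ->
  (forall n, n \in ns -> W y n <> F) ->
  exists a c, [/\ F a, ~~ F c & forall n, n \in ns -> ~~ (W y n a && ~~ W y n c)].
Proof.
move=> dy dF; have dW n : in_dual (W y n) by apply: in_dual_iter.
elim: ns => [|n ns IH] WF.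
  by exists (oone S), (ozero S); rewrite dual_one ?dual_zero.
have [|a [c [Fa Fc ac]]] := IH; first by move=> k kns; apply: WF; rewrite inE kns orbT.
have [e We] : exists e, W y n e != F e.
  apply: contrapT => WF_eq; apply: (WF n (mem_head _ _)); apply: funext => e.
  by apply/eqP; apply: contrapT => We; apply: WF_eq; exists e; apply/negP.
case/boolP: (F e) => Fe.
- exists (omeet a e), c; split; rewrite ?dual_meet ?Fa ?Fe // => k; rewrite inE.
  case/orP=> [/eqP ->|kns].
    by move: We; rewrite Fe dual_meet //; case: (W y n e); rewrite ?andbF.
  by rewrite dual_meet //; apply: contra (ac k kns) => /andP[/andP[-> _] ->].
- exists a, (ojoin c e); split; rewrite ?dual_join ?negb_or ?Fc ?Fe // => k; rewrite inE.
  case/orP=> [/eqP ->|kns].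
    by move: We; rewrite (negbTE Fe) dual_join //; case: (W y n e); rewrite ?orbT ?andbF.
  by rewrite dual_join //; apply: contra (ac k kns) => /andP[-> /norP[-> _]].
Qed.

Lemma orbit_onto (y F : S -> bool) (b : bool) : in_dual y -> in_dual F ->
  exists n, [/\ n <= d, odd n = b & W y n = F].
Proof.
move=> dy dF; apply: contrapT => not_hit.
have [|a [c [Fa Fc ac]]] := @separating_pair y F [seq n <- iota 0 d.+1 | odd n == b] dy dF.
  move=> n; rewrite mem_filter mem_iota ltnS => /andP[/eqP n_odd n_le] WF.
  by apply: not_hit; exists n.
have meet_ac : omeet a c <> a.
  by move=> ac_a; move: Fa; rewrite -ac_a dual_meet // (negbTE Fc) andbF.
have [n n_le /and3P[n_odd Wa Wc]] := orbit_separates b dy meet_ac.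
by move: (ac n); rewrite mem_filter mem_iota ltnS n_le n_odd Wa Wc => /(_ isT).
Qed.

End OrbitsOfDiscriminatorAlgebra.

Section OrbitIsomorphism.
Variables (S : ockham) (y0 : S -> bool) (m : nat).
Local Notation W n := (iter n (@dual_g S) y0).
Hypotheses (dy0 : in_dual y0) (m_odd : odd m) (y0_period : W m = y0).
Hypothesis y0_min : forall n, 0 < n -> W n = y0 -> m <= n.
Hypothesis orbit_onto : forall F, in_dual F -> exists n, W n = F.

Lemma in_dual_orbit n : in_dual (W n). Proof. exact: in_dual_iter. Qed.

Lemma orbit_mod n : W n = W (n %% m).
Proof.
rewrite {1}(divn_eq n m) addnC iterD; congr (iter _ _ _).
by elim: (n %/ m) => //= k IH; rewrite mulSn iterD IH y0_period.
Qed.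

Lemma orbit_inj i j : i < m -> j < m -> W i = W j -> i = j.
Proof.
have no_repeat k l : k < l -> l < m -> W k <> W l.
  move=> kl lm Wkl; have : W (m - l + k) = y0.
    by rewrite iterD Wkl -iterD subnK ?y0_period // ltnW.
  by move/(y0_min _); lia.
move=> im jm Wij; case: (ltngtP i j) => // [ij|ji].
- by case: (no_repeat i j).
- by case: (no_repeat j i _ _ (esym Wij)).
Qed.

Lemma orbit_ptle_eq i j : ptle (W i) (W j) -> W i = W j.
Proof.
have W_period k : iter m (@dual_g S) (W k) = W k by rewrite -iterD addnC iterD y0_period.
move=> ij; have := ptle_iter_dual_g m ij; rewrite m_odd !W_period => ji.
by apply: funext => a; apply/idP/idP; [apply/implyP: (ij a)|apply/implyP: (ji a)].
Qed.

Lemma exists_orbit_sep i j : i < m -> j < m -> j != i -> exists e, W i e && ~~ W j e.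
Proof.
move=> im jm ji; apply: contrapT => no_sep.
have /orbit_ptle_eq /(orbit_inj im jm) ij : ptle (W i) (W j).
  move=> a; apply: contrapT => /negP Wij; apply: no_sep; exists a.
  by move: Wij; case: (W i a); case: (W j a).
by rewrite ij eqxx in ji.
Qed.

Lemma exists_orbit_indicator i : i < m -> exists e, forall j, j < m -> W j e = (j == i).
Proof.
move=> im; suff [e [Wie Wje]] : exists e, W i e /\
    forall j, j \in iota 0 m -> j < m -> j != i -> ~~ W j e.
  exists e => j jm; case: eqP => [->//|/eqP ji]; apply/negbTE/Wje => //.
  by rewrite mem_iota.
elim: (iota 0 m) => [|j js [e [Wie Wje]]].
  by exists (oone S); rewrite dual_one //; apply: in_dual_orbit.
case: (boolP ((j < m) && (j != i))) => [/andP[jm ji]|not_j].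
- have [f /andP[Wif Wjf]] := exists_orbit_sep im jm ji.
  exists (omeet e f); rewrite dual_meet ?Wie ?Wif //; last exact: in_dual_orbit.
  split=> // k; rewrite inE dual_meet; last exact: in_dual_orbit.
  by case/orP=> [/eqP -> _ _|kjs km ki]; rewrite ?(negbTE Wjf) ?(negbTE (Wje k kjs km ki)) ?andbF.
- exists e; split=> // k; rewrite inE => /orP[/eqP -> jm ji|]; last exact: Wje.
  by move: not_j; rewrite jm ji.
Qed.

Lemma exists_orbit_subset (T : seq nat) : exists a, forall i, i < m -> W i a = (i \in T).
Proof.
elim: T => [|j T [a Wa]].
  by exists (ozero S) => i _; rewrite dual_zero //; apply: in_dual_orbit.
case: (ltnP j m) => [jm|mj].
- have [e We] := exists_orbit_indicator jm; exists (ojoin a e) => i im.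
  by rewrite dual_join ?Wa ?We // ?inE 1?orbC //; apply: in_dual_orbit.
- exists a => i im; rewrite Wa // inE; case: eqP => // ij.
  by move: im; rewrite ij ltnNge mj.
Qed.

Definition orbit_map (a : S) : cycle_algebra m := fun i : 'I_m => W i a.

Lemma orbit_map_hom : is_hom orbit_map.
Proof.
have dW i : in_dual (W i) by apply: in_dual_orbit.
split=> [a b|a b|a||]; apply: funext => i; rewrite /orbit_map /=.
- by rewrite /cyc_join dual_join.
- by rewrite /cyc_meet dual_meet.
- by rewrite /cyc_g dual_og -[dual_g _]/(W i.+1) orbit_mod.
- by rewrite /cyc_zero dual_zero.
- by rewrite /cyc_one dual_one.
Qed.

Lemma orbit_map_inj : injective orbit_map.
Proof.
have m_gt0 : 0 < m by case: (m) m_odd.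
move=> a b ab; apply: dual_inj => F /orbit_onto [n <-]; rewrite orbit_mod.
exact: (congr1 (fun f => f (Ordinal (ltn_pmod n m_gt0))) ab).
Qed.

Lemma orbit_map_onto (h : cycle_algebra m) : exists a, orbit_map a = h.
Proof.
have [a Wa] := exists_orbit_subset [seq val i | i <- enum 'I_m & h i].
exists a; apply: funext => i; rewrite /orbit_map Wa // mem_map; last exact: val_inj.
by rewrite mem_filter mem_enum andbT.
Qed.

End OrbitIsomorphism.

Lemma discriminator_cycle_iso (S : ockham) (t : term) :
  induces_discriminator S t -> ozero S <> oone S ->
  exists2 k, k <= gdepth t & exists f : S -> cycle_algebra k.*2.+1,
    [/\ is_hom f, injective f & forall h, exists a, f a = h].
Proof.
move=> t_disc S01.
have [|y0 [dy0 _ _]] := @exists_dual_sep S (oone S) (ozero S).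
  by rewrite /ole omeetx0.
have [n1 [n1_le n1_odd Wn1]] := orbit_onto t_disc true dy0 dy0.
pose period n := (0 < n) && `[< iter n (@dual_g S) y0 = y0 >].
have [|m /andP[m_gt0 /asboolP Wm] m_min] := ex_minnP (P := period).
  by exists n1; rewrite /period odd_gt0 //=; apply/asboolP.
have y0_min n : 0 < n -> iter n (@dual_g S) y0 = y0 -> m <= n.
  by move=> n_gt0 Wn; apply: m_min; rewrite /period n_gt0; apply/asboolP.
have m_dvd : m %| n1.
  apply: contrapT => /negP; rewrite /dvdn -lt0n => n1m_gt0.
  by have := y0_min _ n1m_gt0; rewrite -(orbit_mod Wm) Wn1 leqNgt ltn_pmod // => /(_ erefl).
have m_odd : odd m := dvdn_odd m_dvd n1_odd.
have m_le : m <= gdepth t by apply: leq_trans (dvdn_leq (odd_gt0 n1_odd) m_dvd) n1_le.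
exists m./2; first lia.
have -> : m./2.*2.+1 = m by rewrite -[RHS](odd_double_half m) m_odd add1n.
have W_onto F : in_dual F -> exists n, iter n (@dual_g S) y0 = F.
  by move=> dF; have [n [_ _ WF]] := orbit_onto t_disc true dy0 dF; exists n.
exists (@orbit_map S y0 m); split.
- exact: orbit_map_hom dy0 Wm.
- exact: orbit_map_inj m_odd Wm W_onto.
- exact: orbit_map_onto dy0 m_odd Wm y0_min.
Qed.

Lemma SI_nontrivial (A : ockham) : subdirectly_irreducible A -> ozero A <> oone A.
Proof.
case=> a [b [ab _]] A01; apply: ab.
by rewrite -(omeet1 a) -(omeet1 b) -A01 !omeetx0.
Qed.

Fixpoint cycle_algebras (E : term -> term -> Prop) (n : nat) : seq ockham :=
  if n is k.+1 then
    if `[< in_variety E (cycle_algebra k.*2.+1) >] then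
      cycle_algebra k.*2.+1 :: cycle_algebras E k
    else cycle_algebras E k
  else [::].

Lemma In_cycle_algebras E n A : List.In A (cycle_algebras E n) ->
  exists k, [/\ k < n, in_variety E (cycle_algebra k.*2.+1) & A = cycle_algebra k.*2.+1].
Proof.
elim: n => [//|n IH] /=; case: asboolP => [En [<-|]|_]; first by exists n.
all: by move/IH => [k [kn Ek ->]]; exists k; split=> //; apply: ltnW.
Qed.

Lemma cycle_algebras_In E n k : k < n -> in_variety E (cycle_algebra k.*2.+1) ->
  List.In (cycle_algebra k.*2.+1) (cycle_algebras E n).
Proof.
elim: n => [//|n IH] /=; rewrite ltnS leq_eqVlt => /orP[/eqP ->|kn] Ek.
- by case: asboolP => // _; left.
- by case: asboolP => _; [right|]; apply: IH.
Qed.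

(* An identity failing in [A] fails in a subdirectly irreducible quotient, which is some
   [cycle_algebra (2k+1)] with [k <= gdepth t] lying in the variety. *)
Lemma generated_by_cycle_algebras E t :
  (forall A, in_variety E A -> subdirectly_irreducible A -> induces_discriminator A t) ->
  generated_by E (cycle_algebras E (gdepth t).+1).
Proof.
move=> t_disc A; split=> [EA l r B_lr v|B_A l r E_lr]; last first.
  by apply: B_A => A' /In_cycle_algebras [k [_ Ek ->]]; apply: Ek.
apply: contrapT => /exists_SI_quotient [Q [f [f_hom f_onto f_lr SI_Q]]].
have EQ := in_variety_hom_onto f_hom f_onto EA.
have [k k_le [h [h_hom h_inj h_onto]]] :=
  discriminator_cycle_iso (t_disc Q EQ SI_Q) (SI_nontrivial SI_Q).
have EC := in_variety_hom_onto h_hom h_onto EQ.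
apply: f_lr; rewrite !(hom_teval f_hom); apply: (satisfies_hom_inj h_hom h_inj).
exact: B_lr (cycle_algebras_In _ EC).
Qed.

Theorem theorem5p13 (E : term -> term -> Prop) :
  discriminator_variety E <->
  exists B : seq ockham,
    generated_by E B /\
    (forall A, List.In A B -> exists m : nat, odd m /\ dual_isomorphic_Cm A m).
Proof.
split=> [[t [_ t_disc]]|[B [gen cycles]]]; last first.
  exact: discriminator_variety_of_odd_cycles gen cycles.
exists (cycle_algebras E (gdepth t).+1); split; first exact: generated_by_cycle_algebras.
move=> A /In_cycle_algebras [k [_ _ ->]]; exists k.*2.+1.
by split; [rewrite /= odd_double|apply: cycle_algebra_dual].
Qed.
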